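(* Consider a discrete-time system over $t=0,\dots,T$ with dynamics $x_0=f_0(\delta_0)$, $x_t=f_t(x_{t-1},u_{t-1},\delta_t)$ for $t=1,\dots,T$, and measured outputs $y_0=g_0(x_0,\delta_0)$, $y_t=g_t(x_t,u_{t-1},\delta_t)$ for $t=1,\dots,T-1$, where $u_t$ are control inputs and $\delta_t$ exogenous inputs. Let $\psi_t$ be the input-output maps defined by $y_t=\psi_t(u_{0:t-1},\delta_{0:t})$ (obtained by iterating the dynamics), with $\psi_0(\delta_0)=g_0(f_0(\delta_0),\delta_0)$. Suppose the system is purifiable, i.e., for each $t=1,\dots,T-1$ there exist mappings $p_t,q_t,\xi_t$ such that for all $u_{0:t-1}$ and $\delta_{0:t}$, \[ p_t(\psi_{0:t}(u_{0:t-1},\delta_{0:t}),u_{0:t-1})=\xi_t(\delta_{0:t}) \iff q_t(\xi_{0:t}(\delta_{0:t}),u_{0:t-1})=\psi_t(u_{0:t-1},\delta_{0:t}), \] and set $p_0(y_0)=y_0$, $q_0(e_0)=e_0$, $\xi_0(\delta_0)=g_0(f_0(\delta_0),\delta_0)$. Let $e_t=\xi_t(\delta_{0:t})$ (the purified output) and $e=\xi(\delta)=(e_0,\dots,e_{T-1})$. Then there is a one-to-one correspondence between causal output feedback policies $\pi=(\pi_0,\dots,\pi_{T-1})$, $u_t=\pi_t(y_{0:t})$, and causal policies $Q=(Q_0,\dots,Q_{T-1})$ in the purified output, $u_t=Q_t(e_{0:t})$. Moreover, given a causal $Q$ in $e$, the unique corresponding causal $\pi$ in $y$ is given by the recursion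 \[ \pi_0(y_0)=Q_0(y_0),\qquad \pi_t(y_{0:t})=Q_t\big(p_{0:t}(y_{0:t},\pi_{0:t-1}(y_{0:t-1}))\big),\quad t=1,\dots,T-1. \]
   Context: Subscripts $t_1:t_2$ denote trajectories, e.g. $\delta_{0:t}=(\delta_0,\dots,\delta_t)$, $u_{0:t-1}=(u_0,\dots,u_{t-1})$. The notation $p_{0:t}(y_{0:t},u_{0:t-1})$ denotes the vector $(p_0(y_0),p_1(y_{0:1},u_0),\dots,p_t(y_{0:t},u_{0:t-1}))$, and similarly $\psi_{0:t}$, $\xi_{0:t}$, $\pi_{0:t-1}(y_{0:t-1})=(\pi_0(y_0),\dots,\pi_{t-1}(y_{0:t-1}))$. A policy is causal if its $t$-th component depends only on the arguments up to time $t$. A policy $\pi$ in $y$ and a policy $Q$ in $e$ correspond when they generate the same closed-loop control inputs, i.e., $u_t=\pi_t(y_{0:t})$ for all $t$ exactly when $u_t=Q_t(e_{0:t})$ for all $t$, for every exogenous input trajectory. *)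

(* Trajectories are sequences [nat -> A]; a map "of z_{0:t}"
   is a map on whole sequences that depends only on the prefix z_0..z_t. *)
From Stdlib Require Import Arith.

Set Implicit Arguments.

Definition agree_upto {A : Type} (t : nat) (a b : nat -> A) : Prop :=
  forall s, s <= t -> a s = b s.

Definition agree_before {A : Type} (t : nat) (a b : nat -> A) : Prop :=
  forall s, s < t -> a s = b s.

Fixpoint state {X U D : Type} (f0 : D -> X) (f : nat -> X -> U -> D -> X)
  (u : nat -> U) (d : nat -> D) (t : nat) : X :=
  match t with
  | 0 => f0 (d 0)
  | S s => f (S s) (state f0 f u d s) (u s) (d (S s))
  end.

Definition psi {X U D Y : Type} (f0 : D -> X) (f : nat -> X -> U -> D -> X)
  (g0 : X -> D -> Y) (g : nat -> X -> U -> D -> Y)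
  (u : nat -> U) (d : nat -> D) (t : nat) : Y :=
  match t with
  | 0 => g0 (state f0 f u d 0) (d 0)
  | S s => g (S s) (state f0 f u d (S s)) (u s) (d (S s))
  end.

Definition xi_full {X D Y : Type} (f0 : D -> X) (g0 : X -> D -> Y)
  (xi : nat -> (nat -> D) -> Y) (d : nat -> D) (t : nat) : Y :=
  match t with
  | 0 => g0 (f0 (d 0)) (d 0)
  | S _ => xi t d
  end.

Definition p_full {U Y : Type} (p : nat -> (nat -> Y) -> (nat -> U) -> Y)
  (t : nat) (y : nat -> Y) (u : nat -> U) : Y :=
  match t with
  | 0 => y 0
  | S _ => p t y u
  end.

Definition q_full {U Y : Type} (q : nat -> (nat -> Y) -> (nat -> U) -> Y)
  (t : nat) (e : nat -> Y) (u : nat -> U) : Y :=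
  match t with
  | 0 => e 0
  | S _ => q t e u
  end.

Definition causal_policy {A U : Type} (T : nat) (pi : nat -> (nat -> A) -> U) : Prop :=
  forall t, t < T -> forall a a', agree_upto t a a' -> pi t a = pi t a'.

Definition corresponds {X U D Y : Type} (T : nat) (f0 : D -> X)
  (f : nat -> X -> U -> D -> X) (g0 : X -> D -> Y) (g : nat -> X -> U -> D -> Y)
  (xi : nat -> (nat -> D) -> Y)
  (pi : nat -> (nat -> Y) -> U) (Q : nat -> (nat -> Y) -> U) : Prop :=
  forall (d : nat -> D) (u : nat -> U),
    (forall t, t < T -> u t = pi t (psi f0 f g0 g u d)) <->
    (forall t, t < T -> u t = Q t (xi_full f0 g0 xi d)).

Definition equiv_y {X U D Y : Type} (T : nat) (f0 : D -> X)
  (f : nat -> X -> U -> D -> X) (g0 : X -> D -> Y) (g : nat -> X -> U -> D -> Y)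
  (pi1 pi2 : nat -> (nat -> Y) -> U) : Prop :=
  forall (d : nat -> D) (u : nat -> U),
    (forall t, t < T -> u t = pi1 t (psi f0 f g0 g u d)) <->
    (forall t, t < T -> u t = pi2 t (psi f0 f g0 g u d)).

Definition equiv_e {X D Y U : Type} (T : nat) (f0 : D -> X) (g0 : X -> D -> Y)
  (xi : nat -> (nat -> D) -> Y) (Q1 Q2 : nat -> (nat -> Y) -> U) : Prop :=
  forall (d : nat -> D) (u : nat -> U),
    (forall t, t < T -> u t = Q1 t (xi_full f0 g0 xi d)) <->
    (forall t, t < T -> u t = Q2 t (xi_full f0 g0 xi d)).

(** The recursion  pi_0(y_0) = Q_0(y_0),
      pi_t(y_{0:t}) = Q_t(p_{0:t}(y_{0:t}, pi_{0:t-1}(y_{0:t-1}))).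
    [pi_prefix Q y n] is an input sequence whose entries r < n are pi_r(y);
    entries r >= n are an irrelevant filler (Q_0 y) (p_t is causal, so it
    only reads u_0..u_{t-1}). *)
Fixpoint pi_prefix {U Y : Type} (p : nat -> (nat -> Y) -> (nat -> U) -> Y)
  (Q : nat -> (nat -> Y) -> U) (y : nat -> Y) (n : nat) : nat -> U :=
  match n with
  | 0 => fun _ => Q 0 y
  | S m => fun r =>
      if Nat.eqb r m then Q m (fun s => p_full p s y (pi_prefix p Q y m))
      else pi_prefix p Q y m r
  end.

Definition pi_of_Q {U Y : Type} (p : nat -> (nat -> Y) -> (nat -> U) -> Y)
  (Q : nat -> (nat -> Y) -> U) (t : nat) (y : nat -> Y) : U :=
  Q t (fun s => p_full p s y (pi_prefix p Q y t)).

(* Along every closed loop the measured and the purified outputs determine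
   each other causally: e_t = p_t(y_{0:t}, u_{0:t-1}) and
   y_t = q_t(e_{0:t}, u_{0:t-1}).  So, by strong induction on t, the recursion
   pi_t(y) = Q_t(p_{0:t}(y, pi_{0:t-1}(y))) produces along any loop exactly the
   inputs Q_t(e_{0:t}), and the same recursion with q in place of p turns a
   causal policy in y into a corresponding causal policy in e. *)
From Stdlib Require Import Arith Lia.

Section RecursivePolicy.

Context {U Y : Type}.
Variables (T : nat) (p : nat -> (nat -> Y) -> (nat -> U) -> Y)
  (Q : nat -> (nat -> Y) -> U).

Hypothesis p_causal : forall t, 1 <= t < T -> forall y y' u u',
  agree_upto t y y' -> agree_before t u u' -> p t y u = p t y' u'.

Hypothesis Q_causal : causal_policy T Q.

Lemma pi_prefix_lt (y : nat -> Y) n r :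
  r < n -> pi_prefix p Q y n r = pi_of_Q p Q r y.
Proof.
  induction n as [|m IHm]; intros Hr; [lia|].
  simpl. destruct (Nat.eqb_spec r m) as [-> | Hne]; [reflexivity|].
  apply IHm; lia.
Qed.

Lemma causal_pi_of_Q : causal_policy T (pi_of_Q p Q).
Proof.
  intros t; induction t as [t IH] using lt_wf_ind; intros Ht y y' Hyy.
  apply Q_causal; [assumption|].
  intros [|s] Hs; [apply Hyy; lia|].
  apply p_causal; [lia | intros k Hk; apply Hyy; lia |].
  intros k Hk. rewrite !pi_prefix_lt by lia.
  apply IH; [lia | lia | intros j Hj; apply Hyy; lia].
Qed.

Section ClosedLoop.

Variables (y e : nat -> Y) (u : nat -> U).

Hypothesis p_full_loop : forall s, s < T -> p_full p s y u = e s.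

Lemma pi_of_Q_loop t :
  t < T -> (forall r, r < t -> u r = Q r e) -> pi_of_Q p Q t y = Q t e.
Proof.
  induction t as [t IH] using lt_wf_ind; intros Ht Hu.
  apply Q_causal; [assumption|].
  intros s Hs. rewrite <- p_full_loop by lia.
  destruct s as [|s]; [reflexivity|].
  apply p_causal; [lia | intros k Hk; reflexivity |].
  intros k Hk. rewrite pi_prefix_lt, IH by (try lia; intros j Hj; apply Hu; lia).
  symmetry; apply Hu; lia.
Qed.

Lemma closed_loop_pi_of_Q :
  (forall t, t < T -> u t = pi_of_Q p Q t y) <-> (forall t, t < T -> u t = Q t e).
Proof.
  split.
  - intros Hpi t; induction t as [t IH] using lt_wf_ind; intros Ht.
    rewrite Hpi by assumption.
    apply pi_of_Q_loop; [assumption|].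
    intros r Hr; apply IH; lia.
  - intros HQ t Ht. rewrite pi_of_Q_loop by (try assumption; intros r Hr; apply HQ; lia).
    apply HQ; assumption.
Qed.

End ClosedLoop.

End RecursivePolicy.

Section Correspondence.

Context {X U D Y : Type} {T : nat} {f0 : D -> X} {f : nat -> X -> U -> D -> X}
  {g0 : X -> D -> Y} {g : nat -> X -> U -> D -> Y} {xi : nat -> (nat -> D) -> Y}.

Lemma corresponds_equiv_y {pi1 pi2 Q : nat -> (nat -> Y) -> U} :
  corresponds T f0 f g0 g xi pi1 Q ->
  corresponds T f0 f g0 g xi pi2 Q -> equiv_y T f0 f g0 g pi1 pi2.
Proof. intros H1 H2 d u. rewrite (H1 d u), (H2 d u). reflexivity. Qed.

Lemma corresponds_equiv_e {pi Q1 Q2 : nat -> (nat -> Y) -> U} :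
  corresponds T f0 f g0 g xi pi Q1 ->
  corresponds T f0 f g0 g xi pi Q2 -> equiv_e T f0 g0 xi Q1 Q2.
Proof. intros H1 H2 d u. rewrite <- (H1 d u), (H2 d u). reflexivity. Qed.

Section Purifiable.

Context {p q : nat -> (nat -> Y) -> (nat -> U) -> Y}.

Hypothesis purifiable : forall t, 1 <= t < T -> forall (u : nat -> U) (d : nat -> D),
  p t (psi f0 f g0 g u d) u = xi t d /\
  q t (xi_full f0 g0 xi d) u = psi f0 f g0 g u d t.

Lemma p_full_psi u d s :
  s < T -> p_full p s (psi f0 f g0 g u d) u = xi_full f0 g0 xi d s.
Proof.
  intros Hs. destruct s as [|s]; [reflexivity|].
  apply (purifiable (S s)); lia.
Qed.

Lemma q_full_xi_full u d s :
  s < T -> q_full q s (xi_full f0 g0 xi d) u = psi f0 f g0 g u d s.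
Proof.
  intros Hs. destruct s as [|s]; [reflexivity|].
  apply (purifiable (S s)); lia.
Qed.

Lemma corresponds_pi_of_Q (Q : nat -> (nat -> Y) -> U) :
  (forall t, 1 <= t < T -> forall y y' u u',
     agree_upto t y y' -> agree_before t u u' -> p t y u = p t y' u') ->
  causal_policy T Q -> corresponds T f0 f g0 g xi (pi_of_Q p Q) Q.
Proof.
  intros p_causal Q_causal d u.
  apply closed_loop_pi_of_Q; try assumption.
  intros s Hs; apply p_full_psi; assumption.
Qed.

(* pi_of_Q reads its map through p_full, which coincides with q_full, so the
   recursion with q in place of p swaps the roles of y and e. *)
Lemma corresponds_to_pi_of_Q (pi : nat -> (nat -> Y) -> U) :
  (forall t, 1 <= t < T -> forall e e' u u',
     agree_upto t e e' -> agree_before t u u' -> q t e u = q t e' u') ->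
  causal_policy T pi -> corresponds T f0 f g0 g xi pi (pi_of_Q q pi).
Proof.
  intros q_causal pi_causal d u. symmetry.
  apply closed_loop_pi_of_Q; try assumption.
  intros s Hs; apply q_full_xi_full; assumption.
Qed.

End Purifiable.

End Correspondence.

Theorem theorem2 (X U D Y : Type) (T : nat)
  (f0 : D -> X) (f : nat -> X -> U -> D -> X)
  (g0 : X -> D -> Y) (g : nat -> X -> U -> D -> Y)
  (p q : nat -> (nat -> Y) -> (nat -> U) -> Y)
  (xi : nat -> (nat -> D) -> Y)
  (* p_t, q_t, xi_t are maps of (y_{0:t}, u_{0:t-1}), (e_{0:t}, u_{0:t-1}), d_{0:t} *)
  (Hp_caus : forall t, 1 <= t < T -> forall y y' u u',
      agree_upto t y y' -> agree_before t u u' -> p t y u = p t y' u')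
  (Hq_caus : forall t, 1 <= t < T -> forall e e' u u',
      agree_upto t e e' -> agree_before t u u' -> q t e u = q t e' u')
  (Hxi_caus : forall t, 1 <= t < T -> forall d d',
      agree_upto t d d' -> xi t d = xi t d')
  (* purifiability *)
  (Hpur : forall t, 1 <= t < T -> forall (u : nat -> U) (d : nat -> D),
      p t (psi f0 f g0 g u d) u = xi t d /\
      q t (xi_full f0 g0 xi d) u = psi f0 f g0 g u d t) :
  (* every causal pi in y has a corresponding causal Q in e *)
  (forall pi : nat -> (nat -> Y) -> U, causal_policy T pi ->
     exists Q : nat -> (nat -> Y) -> U,
       causal_policy T Q /\ corresponds T f0 f g0 g xi pi Q) /\
  (* every causal Q in e has a corresponding causal pi in y, given by the
     recursion, unique up to closed-loop equivalence *)
  (forall Q : nat -> (nat -> Y) -> U, causal_policy T Q ->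
     causal_policy T (pi_of_Q p Q) /\
     corresponds T f0 f g0 g xi (pi_of_Q p Q) Q /\
     (forall pi, causal_policy T pi -> corresponds T f0 f g0 g xi pi Q ->
        equiv_y T f0 f g0 g pi (pi_of_Q p Q))) /\
  (* the causal Q corresponding to a given pi is unique up to closed-loop
     equivalence *)
  (forall (pi Q1 Q2 : nat -> (nat -> Y) -> U),
     corresponds T f0 f g0 g xi pi Q1 -> corresponds T f0 f g0 g xi pi Q2 ->
     equiv_e T f0 g0 xi Q1 Q2).
Proof.
  clear Hxi_caus.
  split; [|split].
  - intros pi Hpi. exists (pi_of_Q q pi). split.
    + apply causal_pi_of_Q; assumption.
    + exact (corresponds_to_pi_of_Q Hpur pi Hq_caus Hpi).
  - intros Q HQ.
    assert (Hcorr : corresponds T f0 f g0 g xi (pi_of_Q p Q) Q)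
      by exact (corresponds_pi_of_Q Hpur Q Hp_caus HQ).
    split; [|split].
    + apply causal_pi_of_Q; assumption.
    + exact Hcorr.
    + intros pi _ Hpi. exact (corresponds_equiv_y Hpi Hcorr).
  - intros pi Q1 Q2. apply corresponds_equiv_e.
Qed.
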